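(* Let $m, n$ be positive integers with $m \mid n$, let $N < 2^n$ be an odd positive integer, and let $x < 2^m$ be a positive integer. Write $x = 2^t x'$ with $t \ge 0$ and $x'$ odd. Let $x_{\mathrm{minv}}$ be the inverse of $x'$ modulo $2^m$, set $z_0 = 0$ and for $j = 0, 1, \ldots, \frac{n-2m}{m}$ define $N_j = \lfloor N/2^{jm}\rfloor \bmod 2^m$, $\mathsf{ctrl}_j = [x_{\mathrm{minv}}(N_j - z_j)] \bmod 2^m \in [0,2^m-1]$, $z'_j = z_j + \mathsf{ctrl}_j\cdot x'$, $z_{j+1} = \lfloor z'_j/2^m\rfloor$. Let $z = z_{(n-m)/m}$, $s = \lfloor N/2^{n-m}\rfloor - z$, and $$\mathsf{out} = \left((-1)^{\frac{N^2-1}{8}}\right)^{t}\cdot (-1)^{\frac{(x'-1)(N-1)}{4}}\cdot\left((-1)^{\frac{x'^2-1}{8}}\right)^{n-m}\cdot\left(\frac{s}{x'}\right).$$ Then $\mathsf{out} = \left(\frac{x}{N}\right)$, and moreover $|s| < 2^m$.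
   Context: $\left(\frac{a}{b}\right)$ denotes the Jacobi symbol, defined for any integer $a$ (possibly negative) and odd positive integer $b = p_1^{e_1}\cdots p_k^{e_k}$ by $\left(\frac{a}{b}\right) = \prod_i \left(\frac{a}{p_i}\right)^{e_i}$, where the Legendre symbol $\left(\frac{a}{p}\right)$ is $0$ if $p\mid a$, $1$ if $a$ is a nonzero quadratic residue mod $p$, and $-1$ otherwise. *)

From mathcomp Require Import all_boot all_order all_algebra.
Set Implicit Arguments. Unset Strict Implicit. Unset Printing Implicit Defensive.
Import Order.TTheory GRing.Theory Num.Theory.
Local Open Scope ring_scope.

Definition legendre (a : int) (p : nat) : int :=
  if (p%:Z %| a)%Z then 0
  else if [exists y : 'I_p, ((y%:Z) ^+ 2 == a %[mod p%:Z])%Z] then 1 else -1.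

Definition jacobi (a : int) (b : nat) : int :=
  \prod_(p <- primes b) legendre a p ^+ logn p b.

Definition Nblock (N m j : nat) : nat := (N %/ 2 ^ (j * m)) %% 2 ^ m.

Definition ctrl (N m x' xminv j : nat) (zj : int) : int :=
  ((xminv%:Z * ((Nblock N m j)%:Z - zj)) %% (2 ^ m)%:Z)%Z.

Fixpoint zseq (N m x' xminv : nat) (j : nat) : int :=
  match j with
  | 0 => 0
  | j'.+1 =>
      let zj := zseq N m x' xminv j' in
      ((zj + ctrl N m x' xminv j' zj * x'%:Z) %/ (2 ^ m)%:Z)%Z
  end.

(* Multiplicativity of the Jacobi symbol and the law for (2/.) give
   (x/N) = (2/N)^t (x'/N), and Jacobi reciprocity turns (x'/N) into
   (-1)^((x'-1)(N-1)/4) (N/x').  The loop is a Montgomery reduction of N modulo x': step j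
   adds the multiple ctrl_j x' that makes the low m bits of z_j + ctrl_j x' equal to N_j and
   shifts them out, so that 0 <= z_j < x' and N = 2^(jm) (floor(N/2^(jm)) - z_j) (mod x')
   throughout.  For j = (n-m)/m this reads N = 2^(n-m) s (mod x'), whence
   (N/x') = (2/x')^(n-m) (s/x'); and |s| < 2^m because floor(N/2^(n-m)) and z both lie in
   [0, 2^m).  Quadratic reciprocity and the law for (2/p) come from Euler's criterion through
   Gauss's lemma and Eisenstein's lattice-point count. *)

From mathcomp Require Import all_boot all_order all_algebra finfield.
From mathcomp Require Import zify ring.
Set Implicit Arguments. Unset Strict Implicit. Unset Printing Implicit Defensive.
Import Order.TTheory GRing.Theory Num.Theory.
Local Open Scope ring_scope.

Lemma odd_halfE (p : nat) : odd p -> p = (2 * p./2).+1.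
Proof. by move=> p_odd; rewrite -[p in LHS]odd_double_half p_odd -muln2 mulnC. Qed.

Lemma dvdn8_sqr_pred (a : nat) : odd a -> (8 %| a ^ 2 - 1)%N.
Proof.
move=> a_odd; have aE := odd_halfE a_odd; set h := a./2 in aE.
have := odd_double_half (h * h.+1); rewrite oddM /= andbN add0n -muln2 => hE.
by apply/dvdnP; exists (h * h.+1)./2; rewrite aE; nia.
Qed.

Lemma odd_sqr_pred_div8 (p : nat) :
  odd p -> odd ((p ^ 2 - 1) %/ 8) = odd (p./2 - p./2./2).
Proof.
move=> p_odd; have := odd_halfE p_odd; have := odd_double_half p./2.
set h := p./2; set u := h./2; rewrite -muln2.
case: (odd h) => /= hE pE.
  have -> : (p ^ 2 - 1 = 8 * (u.+1 * (2 * u).+1))%N by rewrite pE -hE; nia.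
  have -> : (h - u = u.+1)%N by lia.
  by rewrite mulKn // oddM /= oddM andbT.
have -> : (p ^ 2 - 1 = 8 * (u * (2 * u).+1))%N by rewrite pE -hE; nia.
have -> : (h - u = u)%N by lia.
by rewrite mulKn // oddM /= oddM andbT.
Qed.

Lemma odd_sqr_pred_div8M (a b : nat) : odd a -> odd b ->
  odd (((a * b) ^ 2 - 1) %/ 8) = odd ((a ^ 2 - 1) %/ 8) (+) odd ((b ^ 2 - 1) %/ 8).
Proof.
move=> a_odd b_odd.
have sqrE c : odd c -> (c ^ 2 = 8 * ((c ^ 2 - 1) %/ 8) + 1)%N.
  move=> c_odd; rewrite mulnC divnK ?dvdn8_sqr_pred // subnK //.
  by rewrite expn_gt0 odd_gt0.
have := sqrE a a_odd; have := sqrE b b_odd.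
set A := ((a ^ 2 - 1) %/ 8)%N; set B := ((b ^ 2 - 1) %/ 8)%N => bE aE.
have -> : ((a * b) ^ 2 - 1 = 8 * (8 * A * B + A + B))%N by rewrite expnMn aE bE; nia.
by rewrite mulKn // !oddD !oddM.
Qed.

Lemma odd_halfM (a b : nat) : odd a -> odd b -> odd (a * b)./2 = odd a./2 (+) odd b./2.
Proof.
move=> a_odd b_odd; have aE := odd_halfE a_odd; have bE := odd_halfE b_odd.
have abE : (a * b = (2 * (a * b)./2).+1)%N by apply: odd_halfE; rewrite oddM a_odd.
have -> : ((a * b)./2 = (a./2 * b./2).*2 + a./2 + b./2)%N.
  by move: abE; rewrite {1}aE {1}bE -muln2; nia.
by rewrite !oddD odd_double.
Qed.

Lemma sign_halfMl (R : pzRingType) (a b c : nat) : odd a -> odd b ->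
  (-1 : R) ^+ ((a * b)./2 * c./2)%N = (-1) ^+ (a./2 * c./2)%N * (-1) ^+ (b./2 * c./2)%N.
Proof.
move=> a_odd b_odd.
by rewrite -exprD -mulnDl -[LHS]signr_odd -[RHS]signr_odd !oddM odd_halfM // oddD.
Qed.

Lemma pred_mul_pred_div4 (a b : nat) : odd a -> odd b ->
  (((a - 1) * (b - 1)) %/ 4 = a./2 * b./2)%N.
Proof.
move=> a_odd b_odd; have aE := odd_halfE a_odd; have bE := odd_halfE b_odd.
have -> : ((a - 1) * (b - 1) = 4 * (a./2 * b./2))%N by rewrite {1}aE {1}bE; nia.
by rewrite mulKn.
Qed.

Lemma abs_subz_lt (a b c : int) : 0 <= a < c -> 0 <= b < c -> `|a - b| < c.
Proof. by rewrite ltr_norml; lia. Qed.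

Lemma sum_ltn_nat (c n : nat) : (\sum_(1 <= k < n.+1) (c < k))%N = (n - c)%N.
Proof.
elim: n => [|n IHn]; first by rewrite big_geq.
by rewrite big_nat_recr //= IHn; case: ltnP; lia.
Qed.

Lemma sum_leq_nat (c n : nat) : (\sum_(1 <= k < n.+1) (k <= c))%N = minn n c.
Proof.
elim: n => [|n IHn]; first by rewrite big_geq ?min0n.
by rewrite big_nat_recr //= IHn; case: (leqP n.+1 c); lia.
Qed.

Lemma legendre_norm (a : int) (p : nat) : `|legendre a p| <= 1.
Proof. by rewrite /legendre; case: ifP => _ //; case: ifP. Qed.

Lemma legendre_eq_mod (a b : int) (p : nat) :
  (a == b %[mod p])%Z -> legendre a p = legendre b p.
Proof.
move=> /eqP ab; rewrite /legendre ab.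
suff -> : (p %| a)%Z = (p %| b)%Z by [].
by apply/dvdz_mod0P/dvdz_mod0P; rewrite ab.
Qed.

Section EulerCriterion.

Variable p : nat.
Hypotheses (p_pr : prime p) (p_odd : odd p).
Local Notation h := p./2.

Let p_char : p \in [pchar 'F_p] := pchar_Fp p_pr.
Let pE : p = (2 * h).+1 := odd_halfE p_odd.

Let h_gt0 : (0 < h)%N. Proof. by rewrite half_gt0 prime_gt1. Qed.

Lemma Fp_int_eq (u v : int) : ((u%:~R : 'F_p) == v%:~R) = (u == v %[mod p])%Z.
Proof. by rewrite -subr_eq0 -intrB -(dvdz_pcharf p_char) eqz_mod_dvd. Qed.

Lemma Fp_nat_sqr_inj (i j : nat) : (0 < i <= h)%N -> (0 < j <= h)%N ->
  (i%:R : 'F_p) ^+ 2 = j%:R ^+ 2 -> i = j.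
Proof.
move=> /andP[i_gt0 i_le] /andP[j_gt0 j_le] /eqP; rewrite eqf_sqr.
case/orP=> [/eqP/(congr1 val)|].
  by rewrite /= !val_Fp_nat // !modn_small //; lia.
rewrite -subr_eq0 opprK -natrD -(dvdn_pcharf p_char) => /dvdn_leq; lia.
Qed.

Lemma Fp_expr_pred (y : 'F_p) : y != 0 -> y ^+ p.-1 = 1.
Proof.
move=> y_nz; apply: (mulIf y_nz).
by rewrite mul1r -exprSr prednK ?prime_gt0 //; have := expf_card y; rewrite card_Fp.
Qed.

Lemma sqr_expr_half (y : 'F_p) : y != 0 -> (y ^+ 2) ^+ h = 1.
Proof. by move=> y_nz; rewrite -exprM -[(2 * h)%N]/(2 * h).+1.-1 -pE Fp_expr_pred. Qed.

(* The [h] distinct nonzero squares already exhaust the roots of ['X^h - 1]. *)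
Lemma nonsquare_expr_half (a : 'F_p) :
  (forall y : 'F_p, y ^+ 2 != a) -> a ^+ h = -1.
Proof.
move=> a_nsq; have a_nz : a != 0 by apply: contraNneq (a_nsq 0) => ->; rewrite expr0n.
have : (a ^+ h) ^+ 2 = 1 by rewrite -exprM mulnC exprM sqr_expr_half.
move/eqP; rewrite sqrf_eq1 => /orP[/eqP a_root|/eqP //]; exfalso.
pose rs := a :: [seq (i%:R : 'F_p) ^+ 2 | i <- index_iota 1 h.+1].
have : (size rs < size ('X^h - 1 : {poly 'F_p})%R)%N.
  apply: max_poly_roots; first exact/monic_neq0/monicXnsubC/h_gt0.
    rewrite /= /root !hornerE a_root subrr eqxx /=.
    apply/allP => _ /mapP[i i_in ->]; rewrite mem_index_iota in i_in.
    rewrite /root !hornerE sqr_expr_half ?subrr //.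
    by rewrite -(dvdn_pcharf p_char); apply/negP => /dvdn_leq; lia.
  rewrite /= map_inj_in_uniq ?iota_uniq ?andbT.
    by apply/mapP => -[i _ /eqP]; rewrite eq_sym (negPf (a_nsq _)).
  by move=> i j; rewrite !mem_index_iota => i_in j_in; apply: Fp_nat_sqr_inj.
by rewrite size_XnsubC ?h_gt0 //= size_map size_iota subSS subn0 ltnn.
Qed.

Lemma euler_criterion (a : int) : ((legendre a p)%:~R : 'F_p) = (a%:~R : 'F_p) ^+ h.
Proof.
rewrite /legendre; case: ifP => [p_dvd_a|p_ndvd_a].
  move: p_dvd_a; rewrite (dvdz_pcharf p_char) => /eqP->.
  by rewrite expr0n gtn_eqF ?h_gt0.
have a_nz : (a%:~R : 'F_p) != 0 by rewrite -(dvdz_pcharf p_char) p_ndvd_a.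
case: existsP => [[y y_sqr]|a_nsq].
  have y_sqrE : ((y : nat)%:R : 'F_p) ^+ 2 = a%:~R.
    by move: y_sqr; rewrite -Fp_int_eq rmorphXn => /eqP.
  rewrite -y_sqrE sqr_expr_half //.
  by apply: contraNneq a_nz => y_0; rewrite -y_sqrE y_0 expr0n.
rewrite nonsquare_expr_half // => y; apply/eqP => y_sqr; apply: a_nsq.
have y_lt : (val y < p)%N by apply: (leq_trans (ltn_ord y)); rewrite Fp_cast.
exists (Ordinal y_lt); rewrite -Fp_int_eq -y_sqr rmorphXn /=.
by rewrite [_%:~R]natr_Zp.
Qed.

Lemma Fp_int_small_inj (u v : int) : `|u| <= 1 -> `|v| <= 1 ->
  (u%:~R : 'F_p) = v%:~R -> u = v.
Proof.
move=> u_le v_le /eqP; rewrite Fp_int_eq eqz_mod_dvd dvdzE.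
case: (eqVneq u v) => // u_neq_v /dvdn_leq.
rewrite absz_gt0 subr_eq0 u_neq_v => /(_ isT).
have := h_gt0; lia.
Qed.

Lemma legendreM (a b : int) : legendre (a * b) p = legendre a p * legendre b p.
Proof.
apply: Fp_int_small_inj; rewrite ?normrM ?mulr_ile1 ?legendre_norm //.
by rewrite rmorphM /= !euler_criterion rmorphM exprMn.
Qed.

Lemma legendre1n : legendre 1 p = 1.
Proof. by apply: Fp_int_small_inj; rewrite ?legendre_norm // euler_criterion expr1n. Qed.

Lemma legendre_sign (a : int) (k : nat) :
  (a%:~R : 'F_p) ^+ h = (-1) ^+ k -> legendre a p = (-1) ^+ k.
Proof.
move=> aE; apply: Fp_int_small_inj; rewrite ?legendre_norm ?normrX ?normrN1 ?expr1n //.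
by rewrite euler_criterion aE rmorph_sign.
Qed.

End EulerCriterion.

Definition residue_neg (p a k : nat) : bool := (p./2 < (k * a) %% p)%N.

Definition abs_residue (p a k : nat) : nat :=
  if residue_neg p a k then (p - (k * a) %% p)%N else ((k * a) %% p)%N.

Section GaussLemma.

Variables p a : nat.
Hypotheses (p_pr : prime p) (p_odd : odd p) (p_ndvd_a : ~~ (p %| a)%N).
Local Notation h := p./2.
Local Notation I := (index_iota 1 h.+1).

Let p_char : p \in [pchar 'F_p] := pchar_Fp p_pr.
Let pE : p = (2 * h).+1 := odd_halfE p_odd.

Lemma abs_residue_Fp (k : nat) :
  ((abs_residue p a k)%:R : 'F_p) = (-1) ^+ residue_neg p a k * (k * a)%:R.
Proof.
rewrite /abs_residue; case: residue_neg; rewrite ?expr0 ?mul1r ?Fp_nat_mod //.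
rewrite natrB; last exact/ltnW/ltn_pmod/prime_gt0.
by rewrite pchar_Fp_0 // sub0r Fp_nat_mod // expr1 mulN1r.
Qed.

Lemma abs_residue_range (k : nat) :
  (0 < k <= h)%N -> (0 < abs_residue p a k <= h)%N.
Proof.
move=> k_range; have r_gt0 : (0 < (k * a) %% p)%N.
  rewrite lt0n -/(dvdn p _) Euclid_dvdM // (negPf p_ndvd_a) orbF.
  by apply/negP => /dvdn_leq; lia.
have := ltn_pmod (k * a) (prime_gt0 p_pr).
by rewrite /abs_residue /residue_neg; case: ifP; lia.
Qed.

Lemma abs_residue_inj : {in I &, injective (abs_residue p a)}.
Proof.
move=> i j; rewrite !mem_index_iota !ltnS => i_range j_range eq_ij.
have a_nz : (a%:R : 'F_p) != 0 by rewrite -(dvdn_pcharf p_char).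
apply: (Fp_nat_sqr_inj p_pr p_odd) => //.
apply: (mulIf (expf_neq0 2 a_nz)); rewrite -!exprMn.
have := congr1 (fun k => (k%:R : 'F_p) ^+ 2) eq_ij.
by rewrite /= !abs_residue_Fp !exprMn !sqrr_sign !mul1r -!exprMn -!natrM.
Qed.

Lemma perm_abs_residue : perm_eq (map (abs_residue p a) I) I.
Proof.
have uniq_img : uniq (map (abs_residue p a) I).
  by rewrite map_inj_in_uniq ?iota_uniq //; apply: abs_residue_inj.
have sub_img : {subset map (abs_residue p a) I <= I}.
  move=> _ /mapP[k k_in ->]; rewrite mem_index_iota ltnS in k_in.
  by rewrite mem_index_iota ltnS abs_residue_range.
have [_ eq_img] := uniq_min_size uniq_img sub_img (eq_leq (esym (size_map _ _))).
exact: uniq_perm (iota_uniq _ _) eq_img.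
Qed.

Lemma gauss_lemma : legendre a p = (-1) ^+ (\sum_(1 <= k < h.+1) residue_neg p a k).
Proof.
apply: legendre_sign => //; set S := (\sum_(_ <- _) _)%N.
have fact_nz : \prod_(1 <= k < h.+1) (k%:R : 'F_p) != 0.
  rewrite prodf_seq_neq0; apply/allP => k; rewrite mem_index_iota => k_range.
  by rewrite -(dvdn_pcharf p_char); apply/negP => /dvdn_leq; lia.
have := perm_big (x := 1 : 'F_p) (op := *%R) (P := xpredT) (F := fun k => k%:R)
  _ perm_abs_residue.
rewrite big_map; under eq_bigr do rewrite abs_residue_Fp natrM.
rewrite big_split big_split /= prodrXr prodr_const_nat subSS subn0 -/S mulrCA.
rewrite -[RHS]mulr1 => prod_eq; have sign_aE := mulfI fact_nz prod_eq.
by rewrite -[_%:~R]/(a%:R) -[LHS](signrMK S) sign_aE mulr1.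
Qed.

(* Reduce [a * \sum k = p * \sum (k a %/ p) + \sum (k a %% p)] modulo 2: the absolute
   residues permute [1..h], and [p - r] has the parity of [r + 1]. *)
Lemma odd_sum_residue_neg : odd a ->
  odd (\sum_(1 <= k < h.+1) residue_neg p a k) =
  odd (\sum_(1 <= k < h.+1) (k * a) %/ p).
Proof.
move=> a_odd; set S := (\sum_(1 <= k < h.+1) k)%N.
have sum_abs : (\sum_(1 <= k < h.+1) abs_residue p a k)%N = S.
  by rewrite -[RHS](perm_big _ perm_abs_residue) big_map.
have sum_div : (a * S = p * \sum_(1 <= k < h.+1) (k * a) %/ p +
                        \sum_(1 <= k < h.+1) (k * a) %% p)%N.
  rewrite !big_distrr -big_split /=; apply: eq_bigr => k _.
  by rewrite mulnC [(p * _)%N]mulnC -divn_eq.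
have odd_abs k : odd (abs_residue p a k) = odd ((k * a) %% p) (+) residue_neg p a k.
  rewrite /abs_residue; case: residue_neg; last by rewrite addbF.
  by rewrite oddB ?(ltnW (ltn_pmod _ (prime_gt0 p_pr))) // p_odd addbC.
have odd_sum (F : nat -> nat) : odd (\sum_(1 <= k < h.+1) F k) =
    \big[addb/false]_(1 <= k < h.+1) odd (F k).
  exact: (big_morph odd oddD).
move/(congr1 odd): sum_div; rewrite -sum_abs oddD !oddM a_odd p_odd /= !odd_sum.
under eq_bigr do rewrite odd_abs.
rewrite big_split /= [X in _ = X -> _]addbC => /addbI <-.
by apply: eq_bigr => k _; rewrite oddb.
Qed.

End GaussLemma.

Lemma legendre_eisenstein (p a : nat) : prime p -> odd p -> ~~ (p %| a)%N -> odd a ->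
  legendre a p = (-1) ^+ (\sum_(1 <= k < p./2.+1) (k * a) %/ p).
Proof.
by move=> p_pr p_odd p_ndvd_a a_odd;
  rewrite gauss_lemma // -signr_odd odd_sum_residue_neg // signr_odd.
Qed.

Lemma legendre2 (p : nat) : prime p -> odd p -> legendre 2 p = (-1) ^+ ((p ^ 2 - 1) %/ 8).
Proof.
move=> p_pr p_odd; have pE := odd_halfE p_odd.
have h_gt0 : (0 < p./2)%N by rewrite half_gt0 prime_gt1.
have p_ndvd2 : ~~ (p %| 2)%N by apply/negP => /dvdn_leq; lia.
rewrite gauss_lemma // -signr_odd -[RHS]signr_odd odd_sqr_pred_div8 // -sum_ltn_nat.
congr (_ ^+ odd _); apply: eq_big_nat => k /andP[k_gt0 k_le].
by rewrite /residue_neg modn_small ?muln2 ?ltn_half_double //; lia.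
Qed.

Lemma divn_count_le (p q k : nat) : odd p -> odd q -> (k <= p./2)%N ->
  ((k * q) %/ p = \sum_(1 <= j < q./2.+1) (j * p <= k * q))%N.
Proof.
move=> p_odd q_odd k_le; have pE := odd_halfE p_odd; have qE := odd_halfE q_odd.
have p_gt0 : (0 < p)%N by rewrite pE.
under eq_bigr do rewrite -leq_divRL //.
rewrite sum_leq_nat; apply/esym/minn_idPr.
by rewrite -ltnS ltn_divLR //; nia.
Qed.

(* The two sums count the lattice points of ]0, p/2[ x ]0, q/2[ on either side of the
   line [q x = p y], which passes through none of them. *)
Lemma lattice_point_count (p q : nat) : odd p -> odd q -> coprime p q ->
  (\sum_(1 <= k < p./2.+1) (k * q) %/ p + \sum_(1 <= j < q./2.+1) (j * p) %/ q =
   p./2 * q./2)%N.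
Proof.
move=> p_odd q_odd co_pq; have pE := odd_halfE p_odd.
under eq_big_nat => k /andP[_ k_le] do rewrite (divn_count_le p_odd q_odd k_le).
under [X in (_ + X)%N]eq_big_nat => j /andP[_ j_le]
  do rewrite (divn_count_le q_odd p_odd j_le).
rewrite [X in (_ + X)%N]exchange_big_nat -big_split /=.
transitivity (\sum_(1 <= k < p./2.+1) q./2)%N;
  last by rewrite sum_nat_const_nat subSS subn0.
apply: eq_big_nat => k /andP[k_gt0 k_le].
transitivity (\sum_(1 <= j < q./2.+1) 1)%N;
  last by rewrite sum_nat_const_nat subSS subn0 muln1.
rewrite -big_split /=; apply: eq_big_nat => j _.
have jp_neq_kq : (j * p != k * q)%N.
  apply: contraTneq (dvdn_mull j (dvdnn p)) => ->.
  by rewrite Gauss_dvdl // gtnNdvd //; lia.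
by case: (ltngtP (j * p) (k * q)) jp_neq_kq.
Qed.

Theorem quadratic_reciprocity (p q : nat) : prime p -> prime q -> odd p -> odd q ->
  p != q -> legendre p q * legendre q p = (-1) ^+ (p./2 * q./2).
Proof.
move=> p_pr q_pr p_odd q_odd p_neq_q.
have q_ndvd_p : ~~ (q %| p)%N by rewrite dvdn_prime2 // eq_sym.
have p_ndvd_q : ~~ (p %| q)%N by rewrite dvdn_prime2.
rewrite !legendre_eisenstein // -exprD addnC lattice_point_count //.
by rewrite prime_coprime.
Qed.

Lemma legendre_reciprocity (p q : nat) : prime p -> prime q -> odd p -> odd q ->
  legendre p q = (-1) ^+ (p./2 * q./2) * legendre q p.
Proof.
move=> p_pr q_pr p_odd q_odd.
have [<-|p_neq_q] := eqVneq p q; first by rewrite /legendre dvdzz mulr0.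
rewrite -quadratic_reciprocity // -mulrA -expr2.
have p_ndvd_q : ~~ (p %| q)%N by rewrite dvdn_prime2.
by rewrite [legendre q p]legendre_eisenstein // sqrr_sign mulr1.
Qed.

Lemma jacobin1 (a : int) : jacobi a 1 = 1.
Proof. by rewrite /jacobi big_nil. Qed.

Lemma jacobi_prime (a : int) (p : nat) : prime p -> jacobi a p = legendre a p.
Proof. by move=> p_pr; rewrite /jacobi primes_prime // big_seq1 logn_prime ?eqxx. Qed.

Lemma jacobi_eq_mod (a c : int) (b : nat) :
  (a == c %[mod b])%Z -> jacobi a b = jacobi c b.
Proof.
move=> ac; apply: eq_big_seq => p; rewrite mem_primes => /and3P[_ _ p_dvd_b].
congr (_ ^+ _); apply: legendre_eq_mod; move: ac; rewrite !eqz_mod_dvd.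
by apply: dvdz_trans; rewrite dvdzE.
Qed.

Lemma odd_mem_primes (p b : nat) : odd b -> p \in primes b -> prime p /\ odd p.
Proof.
move=> b_odd; rewrite mem_primes => /and3P[p_pr _ /dvdnP[k bE]]; split => //.
by move: b_odd; rewrite bE oddM => /andP[].
Qed.

Lemma jacobiMl (a c : int) (b : nat) : odd b -> jacobi (a * c) b = jacobi a b * jacobi c b.
Proof.
move=> b_odd; rewrite /jacobi -big_split; apply: eq_big_seq => p /(odd_mem_primes b_odd).
by case=> p_pr p_odd; rewrite legendreM // exprMn.
Qed.

Lemma jacobi1n (b : nat) : odd b -> jacobi 1 b = 1.
Proof.
move=> b_odd; rewrite /jacobi big1_seq // => p /andP[_ /(odd_mem_primes b_odd)[p_pr p_odd]].
by rewrite legendre1n // expr1n.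
Qed.

Lemma jacobiXl (a : int) (k b : nat) : odd b -> jacobi (a ^+ k) b = jacobi a b ^+ k.
Proof.
move=> b_odd; elim: k => [|k IHk]; first by rewrite !expr0 jacobi1n.
by rewrite !exprS jacobiMl // IHk.
Qed.

Lemma jacobiE_sub (a : int) (b : nat) (s : seq nat) :
  uniq s -> {subset primes b <= s} -> jacobi a b = \prod_(p <- s) legendre a p ^+ logn p b.
Proof.
move=> s_uniq sub_s; rewrite (bigID (mem (primes b))) /= [X in _ * X]big1 ?mulr1.
  rewrite -big_filter; apply/perm_big/uniq_perm; rewrite ?primes_uniq ?filter_uniq //.
  by move=> p; rewrite mem_filter; case: (boolP (p \in primes b)) => // /sub_s ->.
by move=> p /negPf; rewrite -logn_gt0 lt0n => /negbFE/eqP->.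
Qed.

Lemma jacobiMr (a : int) (b c : nat) : (0 < b)%N -> (0 < c)%N ->
  jacobi a (b * c) = jacobi a b * jacobi a c.
Proof.
move=> b_gt0 c_gt0; have bc_uniq := primes_uniq (b * c).
rewrite [LHS](@jacobiE_sub a _ (primes (b * c))) //.
rewrite (@jacobiE_sub a b (primes (b * c))) //; last first.
  by move=> p; rewrite primesM // => ->.
rewrite (@jacobiE_sub a c (primes (b * c))) //; last first.
  by move=> p; rewrite primesM // orbC => ->.
by rewrite -big_split; apply: eq_bigr => p _; rewrite lognM // exprD.
Qed.

Lemma odd_prime_ind (P : nat -> Prop) : P 1%N ->
  (forall p n, prime p -> odd p -> odd n -> P n -> P (p * n)%N) ->
  forall n, odd n -> P n.
Proof.
move=> P1 PM; elim/ltn_ind => n IHn n_odd.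
have [n_le1|n_gt1] := leqP n 1; first by case: n n_le1 n_odd {IHn} => [|[]].
have p_pr := pdiv_prime n_gt1; have := n_odd.
rewrite -(divnK (pdiv_dvd n)) mulnC oddM => /andP[p_odd k_odd].
apply: PM => //; apply: IHn k_odd.
by rewrite ltn_Pdiv ?prime_gt1 ?odd_gt0.
Qed.

Lemma jacobi2 (b : nat) : odd b -> jacobi 2 b = (-1) ^+ ((b ^ 2 - 1) %/ 8).
Proof.
move: b; apply: odd_prime_ind => [|p n p_pr p_odd n_odd IHn]; first by rewrite jacobin1.
rewrite jacobiMr ?odd_gt0 // jacobi_prime // legendre2 // IHn.
by rewrite -[RHS]signr_odd odd_sqr_pred_div8M // signr_addb !signr_odd.
Qed.

Lemma jacobi_reciprocity_prime (p b : nat) : prime p -> odd p -> odd b ->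
  jacobi p b = (-1) ^+ (p./2 * b./2) * jacobi b p.
Proof.
move=> p_pr p_odd; move: b; apply: odd_prime_ind => [|q n q_pr q_odd n_odd IHn].
  by rewrite jacobin1 jacobi1n // muln0 mul1r.
rewrite jacobiMr ?odd_gt0 // IHn jacobi_prime // legendre_reciprocity //.
rewrite PoszM jacobiMl // [jacobi q p]jacobi_prime // !(mulnC p./2) sign_halfMl //.
by rewrite mulrACA.
Qed.

Theorem jacobi_reciprocity (a b : nat) : odd a -> odd b ->
  jacobi a b = (-1) ^+ (a./2 * b./2) * jacobi b a.
Proof.
move=> + b_odd; move: a; apply: odd_prime_ind => [|p n p_pr p_odd n_odd IHn].
  by rewrite jacobi1n // jacobin1 mulr1.
rewrite PoszM jacobiMl // IHn jacobi_reciprocity_prime // jacobiMr ?odd_gt0 //.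
by rewrite sign_halfMl // mulrACA.
Qed.

Section MontgomeryLoop.

Variables N m x' xminv : nat.
Local Notation D := (2 ^ m)%N.
Local Notation z := (zseq N m x' xminv).

Let D_gt0 : (0 < D)%N. Proof. by rewrite expn_gt0. Qed.

Lemma ctrl_bound (j : nat) (zj : int) : 0 <= ctrl N m x' xminv j zj < D.
Proof. by rewrite /ctrl modz_ge0 ?ltz_pmod //; lia. Qed.

Lemma zseq_bound (j : nat) : (0 < x')%N -> 0 <= z j < x'.
Proof.
move=> x'_gt0; elim: j => [|j /andP[zj_ge0 zj_lt]] /=; first by rewrite ltz_nat.
have /andP[c_ge0 c_lt] := ctrl_bound j (z j).
have cx_le : ctrl N m x' xminv j (z j) * x' <= (D%:Z - 1) * x'.
  by rewrite ler_wpM2r //; lia.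
rewrite divz_ge0 ?ltz_divLR ?ltz_nat //; apply/andP; split.
  by rewrite addr_ge0 // mulr_ge0.
by lia.
Qed.

Hypothesis xminv_inv : (xminv * x' == 1 %[mod 2 ^ m])%N.

Lemma ctrl_mod (j : nat) (zj : int) :
  (zj + ctrl N m x' xminv j zj * x' == (Nblock N m j)%:Z %[mod D])%Z.
Proof.
set y := (xminv%:Z * ((Nblock N m j)%:Z - zj))%R.
have ctrlE : ctrl N m x' xminv j zj = y - (y %/ D)%Z * D.
  by apply/eqP; rewrite eq_sym subr_eq addrC -divz_eq.
have D_dvd : (D %| xminv%:Z * x' - 1)%Z.
  by rewrite -eqz_mod_dvd -PoszM !modz_nat; apply/eqP/congr1/eqP.
rewrite eqz_mod_dvd ctrlE.
have -> : zj + (y - (y %/ D)%Z * D) * x' - (Nblock N m j)%:Z =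
          ((Nblock N m j)%:Z - zj) * (xminv%:Z * x' - 1) - (y %/ D)%Z * x' * D.
  by rewrite /y; ring.
by rewrite rpredB ?dvdz_mull // dvdz_mull.
Qed.

Lemma zseq_step (j : nat) :
  z j + ctrl N m x' xminv j (z j) * x' = (Nblock N m j)%:Z + D%:Z * z j.+1.
Proof.
set w := _ + _; rewrite /= -/w [w in LHS](divz_eq w D) (eqP (ctrl_mod j (z j))).
by rewrite modz_small ?ltz_nat ?ltn_pmod // addrC mulrC.
Qed.

Lemma zseq_mod (j : nat) :
  (N == (2 ^ (j * m))%N%:Z * ((N %/ 2 ^ (j * m))%:Z - z j) %[mod x'])%Z.
Proof.
elim: j => [|j IHj]; first by rewrite mul0n expn0 divn1 subr0 mul1r.
rewrite (eqP IHj) eqz_mod_dvd.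
have powE : (2 ^ (j.+1 * m) = 2 ^ (j * m) * D)%N by rewrite mulSnr expnD.
have quotE : (N %/ 2 ^ (j * m) = D * (N %/ 2 ^ (j.+1 * m)) + Nblock N m j)%N.
  by rewrite /Nblock powE divnMA [(D * _)%N]mulnC -divn_eq.
have := zseq_step j; set c := ctrl _ _ _ _ _ _ => stepE.
have -> : z j = (Nblock N m j)%:Z + D%:Z * z j.+1 - c * x' by rewrite -stepE addrK.
rewrite quotE powE !PoszD !PoszM.
rewrite (_ : _ - _ = (2 ^ (j * m))%N%:Z * c * x'); first exact: dvdz_mull.
ring.
Qed.

End MontgomeryLoop.

Unset Implicit Arguments.

Theorem lemma4p5 (m n N x t x' xminv : nat) :
  (0 < m)%N -> (0 < n)%N -> (m %| n)%N ->
  (0 < N)%N -> odd N -> (N < 2 ^ n)%N ->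
  (0 < x)%N -> (x < 2 ^ m)%N ->
  x = (2 ^ t * x')%N -> odd x' ->
  (xminv < 2 ^ m)%N -> (xminv * x' == 1 %[mod 2 ^ m])%N ->
  let z := zseq N m x' xminv (n %/ m - 1) in
  let s := (N %/ 2 ^ (n - m))%:Z - z in
  let out : int :=
    ((-1) ^+ ((N ^ 2 - 1) %/ 8)) ^+ t
    * (-1) ^+ (((x' - 1) * (N - 1)) %/ 4)
    * ((-1) ^+ ((x' ^ 2 - 1) %/ 8)) ^+ (n - m)
    * jacobi s x' in
  out = jacobi x%:Z N /\ `|s| < (2 ^ m)%:Z.
Proof.
move=> _ n_gt0 m_dvd_n _ N_odd N_lt _ x_lt xE x'_odd _ xminv_inv z s out.
have x'_gt0 := odd_gt0 x'_odd.
have [z_ge0 z_lt] := andP (zseq_bound N m xminv (n %/ m - 1) x'_gt0).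
have N_mod : (N == (2 ^ (n - m))%N%:Z * s %[mod x'])%Z.
  by have := zseq_mod N xminv_inv (n %/ m - 1)%N; rewrite mulnBl divnK ?mul1n.
split.
  rewrite /out xE PoszM -[Posz (2 ^ t)]natz natrX jacobiMl // jacobiXl // jacobi2 //.
  rewrite jacobi_reciprocity // (jacobi_eq_mod N_mod) -natz natrX jacobiMl // jacobiXl //.
  by rewrite jacobi2 // pred_mul_pred_div4 //; ring.
have quot_lt : (N %/ 2 ^ (n - m) < 2 ^ m)%N.
  by rewrite ltn_divLR ?expn_gt0 // -expnD subnKC // dvdn_leq.
have x'_lt : (x' < 2 ^ m)%N by rewrite (leq_ltn_trans _ x_lt) // xE leq_pmull ?expn_gt0.
apply: abs_subz_lt; first by rewrite ltz_nat quot_lt.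
by rewrite z_ge0 (lt_le_trans z_lt) // lez_nat ltnW.
Qed.
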